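(* Let $G$ and $H$ be two connected nontrivial graphs and $S\subseteq V(G\Box H)$. If $V(G^h)\cup V({}^gH)\subseteq\langle S\rangle_C$ for some $g\in V(G)$ and $h\in V(H)$, then $S$ is a cycle hull set of $G\Box H$.
   Context: All graphs are finite, simple and undirected. For a graph $G$ and $S\subseteq V(G)$, the cycle interval $\langle S\rangle$ consists of the vertices of $S$ together with every vertex $w\in V(G)\setminus S$ such that $G[S\cup\{w\}]$ contains a cycle through $w$; $S$ is cycle convex if $\langle S\rangle=S$; the cycle convex hull $\langle S\rangle_C$ is the smallest cycle convex set containing $S$; $S$ is a cycle hull set if $\langle S\rangle_C$ is the whole vertex set. The Cartesian product $G\Box H$ has vertex set $V(G)\times V(H)$, with $(g_1,h_1)\sim(g_2,h_2)$ iff ($g_1\sim g_2$ and $h_1=h_2$) or ($g_1=g_2$ and $h_1\sim h_2$). For $h\in V(H)$, $G^h$ is the subgraph induced by $V(G)\times\{h\}$; for $g\in V(G)$, ${}^gH$ is the subgraph induced by $\{g\}\times V(H)$. A graph is nontrivial if it has at least two vertices. *)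

From mathcomp Require Import all_boot.
Set Implicit Arguments. Unset Strict Implicit. Unset Printing Implicit Defensive.

Definition simple_graph (T : finType) (e : rel T) : Prop :=
  symmetric e /\ irreflexive e.

Definition connected_graph (T : finType) (e : rel T) : Prop :=
  forall x y : T, connect e x y.

Definition nontrivial (T : finType) : Prop := 1 < #|T|.

Definition is_cycle (T : finType) (e : rel T) (c : seq T) : bool :=
  [&& 2 < size c, uniq c & cycle e c].

(* G[A] contains a cycle through w : a cycle all of whose vertices lie in A and
   which contains w (induced subgraph: edges of G among vertices of A). *)
Definition cycle_through_in (T : finType) (e : rel T) (A : {set T}) (w : T) : Prop :=
  exists c : seq T, [/\ is_cycle e c, w \in c & all (fun v => v \in A) c].

Definition in_cycle_interval (T : finType) (e : rel T) (S : {set T}) (w : T) : Prop :=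
  w \in S \/ (w \notin S /\ cycle_through_in e (w |: S) w).

Definition cycle_convex (T : finType) (e : rel T) (S : {set T}) : Prop :=
  forall w, in_cycle_interval e S w -> w \in S.

(* membership in the cycle convex hull <S>_C : belonging to every cycle convex
   superset of S (the hull is the smallest cycle convex set containing S). *)
Definition in_cycle_hull (T : finType) (e : rel T) (S : {set T}) (x : T) : Prop :=
  forall C : {set T}, S \subset C -> cycle_convex e C -> x \in C.

Definition cycle_hull_set (T : finType) (e : rel T) (S : {set T}) : Prop :=
  forall x : T, in_cycle_hull e S x.

Definition cart_rel (T1 T2 : finType) (e1 : rel T1) (e2 : rel T2) : rel (T1 * T2) :=
  fun u v => (e1 u.1 v.1 && (u.2 == v.2)) || ((u.1 == v.1) && e2 u.2 v.2).

Definition layerG (T1 T2 : finType) (h : T2) : {set T1 * T2} := [set u | u.2 == h].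
Definition layerH (T1 T2 : finType) (g : T1) : {set T1 * T2} := [set u | u.1 == g].

From mathcomp Require Import all_boot.
Set Implicit Arguments. Unset Strict Implicit. Unset Printing Implicit Defensive.

(* A cycle convex set [C] containing the cross [V(G^h) ∪ V(^gH)] is everything:
   any 4-cycle [(x,y) (x',y) (x',y') (x,y')] of [G □ H] with three corners in
   [C] forces the fourth into [C]. Walking along a path of [G] from [g], each
   new fibre [^{a'}H] is filled from its point [(a',h)] on [G^h] by walking
   along paths of [H] from [h], using the square spanned by an edge of [G]
   and an edge of [H]. *)

Lemma connected_closed_mem (T : finType) (e : rel T) (a : {pred T}) x :
  symmetric e -> connected_graph e ->
  (forall y z, e y z -> y \in a -> z \in a) -> x \in a -> forall y, y \in a.
Proof.
move=> sym_e conn_e cl_a a_x y.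
have cl_ae : closed e a := intro_closed (sym_connect_sym sym_e) cl_a.
by rewrite -(closed_connect cl_ae (conn_e x y)).
Qed.

Lemma cycle_convex_cycle_mem (T : finType) (e : rel T) (C : {set T})
    (c : seq T) w :
  cycle_convex e C -> is_cycle e c -> w \in c ->
  {in c, forall v, v != w -> v \in C} -> w \in C.
Proof.
move=> convC cyc_c w_c sub_c; apply: convC.
have [|w_notC] := boolP (w \in C); [by left | right; split=> //].
exists c; split=> //.
apply/allP=> v v_c; rewrite !inE.
by case: eqP => [//|/eqP v_neq_w]; apply: sub_c.
Qed.

Section CartesianSquares.

Variables (T1 T2 : finType) (e1 : rel T1) (e2 : rel T2).
Hypotheses (simple1 : simple_graph e1) (simple2 : simple_graph e2).

Lemma cart_square_is_cycle x x' y y' :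
  e1 x x' -> e2 y y' ->
  is_cycle (cart_rel e1 e2) [:: (x, y); (x', y); (x', y'); (x, y')].
Proof.
case: simple1 simple2 => [sym1 irr1] [sym2 irr2] e_xx' e_yy'.
have x_neq : x != x' by apply: contraTneq e_xx' => ->; rewrite irr1.
have y_neq : y != y' by apply: contraTneq e_yy' => ->; rewrite irr2.
rewrite /is_cycle /= /cart_rel /= !inE !xpair_eqE !eqxx e_xx' e_yy' sym1 sym2
  e_xx' e_yy' (negbTE x_neq) (negbTE y_neq) eq_sym (negbTE x_neq) eq_sym
  (negbTE y_neq) /= !andbT ?orbT ?andbF ?orbF //.
Qed.

Lemma cycle_convex_cart_square (C : {set T1 * T2}) x x' y y' :
  cycle_convex (cart_rel e1 e2) C -> e1 x x' -> e2 y y' ->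
  (x, y) \in C -> (x', y) \in C -> (x, y') \in C -> (x', y') \in C.
Proof.
move=> convC e_xx' e_yy' C_xy C_x'y C_xy'.
apply: (cycle_convex_cycle_mem convC (cart_square_is_cycle e_xx' e_yy')).
  by rewrite !inE eqxx !orbT.
by move=> v; rewrite !inE => /or4P[] /eqP-> //; rewrite eqxx.
Qed.

Hypotheses (connected1 : connected_graph e1) (connected2 : connected_graph e2).

Lemma cycle_convex_cart_fibre_step (C : {set T1 * T2}) a a' h :
  cycle_convex (cart_rel e1 e2) C -> e1 a a' ->
  layerH T2 a \subset C -> (a', h) \in C -> layerH T2 a' \subset C.
Proof.
move=> convC e_aa' /subsetP fibre_a C_a'h; apply/subsetP=> -[b c].
rewrite inE /= => /eqP->; move: c.
apply: (connected_closed_mem (a := [pred c | (a', c) \in C]) _ connected2).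
- by case: simple2.
- move=> c c' e_cc' /= C_a'c.
  by apply: (cycle_convex_cart_square convC e_aa' e_cc'); rewrite // fibre_a
    ?inE.
- exact: C_a'h.
Qed.

Lemma cycle_convex_cart_cross_full (C : {set T1 * T2}) g h :
  cycle_convex (cart_rel e1 e2) C ->
  layerG T1 h :|: layerH T2 g \subset C -> forall u, u \in C.
Proof.
move=> convC /subsetP cross_C [a b].
have fibres : forall a, layerH T2 a \subset C.
  apply: (connected_closed_mem (a := [pred a | layerH T2 a \subset C]) _
    connected1 _ (x := g)).
  - by case: simple1.
  - move=> a0 a1 e_a01 /= fibre_a0.
    apply: (cycle_convex_cart_fibre_step convC e_a01 fibre_a0 (h := h)).
    by rewrite cross_C // !inE eqxx.
  - by apply/subsetP=> u u_g; rewrite cross_C // inE u_g orbT.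
by apply: (subsetP (fibres a)); rewrite inE.
Qed.

End CartesianSquares.

Theorem mainTheorem6 (T1 T2 : finType) (e1 : rel T1) (e2 : rel T2)
    (S : {set T1 * T2}) :
  simple_graph e1 -> simple_graph e2 ->
  connected_graph e1 -> connected_graph e2 ->
  nontrivial T1 -> nontrivial T2 ->
  (exists (g : T1) (h : T2),
      forall u : T1 * T2, u \in layerG T1 h :|: layerH T2 g ->
        in_cycle_hull (cart_rel e1 e2) S u) ->
  cycle_hull_set (cart_rel e1 e2) S.
Proof.
move=> simple1 simple2 conn1 conn2 _ _ [g [h cross_hull]] u C S_C convC.
apply: (cycle_convex_cart_cross_full simple1 simple2 conn1 conn2 convC).
by apply/subsetP=> v /cross_hull; apply.
Qed.
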